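(* Let $c>0$, $k>0$, and $s,t\in\mathbb{R}$. Consider the function $$\gamma_1(x)=\frac{L'+M'\cos(s+x)}{N'+P'\cos(t+x)},\qquad x\in\mathbb{R},$$ with $L'=2$, $M'=2$, $N'=1+k^2+c$, $P'=2k$ (this corresponds to $\gamma_1(x)=\frac{P_0|a_1e^{jx}+h|^2}{P_1|b_1e^{jx}+g|^2+c}$ with $|a_1|=|b_1|=|h|=1$, $P_0=P_1=1$, $|g|=k$, $s=\angle a_1-\angle h$, $t=\angle b_1-\angle g$). Let $C'=(L'P')^2+(M'N')^2-2L'M'N'P'\cos(s-t)$ and let $\gamma_{\max}\ge\gamma_{\min}$ be the two values $$\frac{L'}{N'}-\frac{1}{N'}\,\frac{C'}{P'\bigl(L'P'-M'N'\cos(s-t)\bigr)\pm N'\sqrt{C'-\bigl(M'P'\sin(s-t)\bigr)^2}}$$ (the SINR values at the stationary points of $\gamma_1$). Let $\gamma_2=\gamma_1(-s)=\frac{L'+M'}{N'+P'\cos(s-t)}$ be the value at the signal-alignment choice $x=-s$. Then $$\gamma_{\max}-\gamma_2=g_1(k)=\frac{16k^2\sin^2(s-t)}{(k^2+2k\cos(s-t)+1+c)\bigl((k+1)^2+c\bigr)\bigl((k-1)^2+c\bigr)},$$ $$\gamma_2-\gamma_{\min}=g_2(k)=\frac{4}{k^2+2k\cos(s-t)+1+c}.$$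
   Context: $\angle z$ denotes the argument of a complex number $z$. The signal-alignment (SA) solution chooses the phase $x$ so that the reflected signal $a_1e^{jx}$ is phase-aligned with the direct signal $h$, i.e. $x=-s$. *)

From Stdlib Require Import Reals.
Open Scope R_scope.

Definition Lp : R := 2.
Definition Mp : R := 2.
Definition Np (c k : R) : R := 1 + k ^ 2 + c.
Definition Pp (k : R) : R := 2 * k.

Definition gamma1 (c k s t x : R) : R :=
  (Lp + Mp * cos (s + x)) / (Np c k + Pp k * cos (t + x)).

Definition Cp (c k s t : R) : R :=
  (Lp * Pp k) ^ 2 + (Mp * Np c k) ^ 2
  - 2 * Lp * Mp * Np c k * Pp k * cos (s - t).

Definition gamma_stat (plus : bool) (c k s t : R) : R :=
  let sq := sqrt (Cp c k s t - (Mp * Pp k * sin (s - t)) ^ 2) in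
  let den := Pp k * (Lp * Pp k - Mp * Np c k * cos (s - t))
             + (if plus then 1 else -1) * Np c k * sq in
  Lp / Np c k - (1 / Np c k) * (Cp c k s t / den).

Definition gamma_max (c k s t : R) : R :=
  Rmax (gamma_stat true c k s t) (gamma_stat false c k s t).
Definition gamma_min (c k s t : R) : R :=
  Rmin (gamma_stat true c k s t) (gamma_stat false c k s t).

(** With L' = M' = 2 and P' = 2k, the constant C' equals
    4 ((N' - P' cos(s-t))^2 + (P' sin(s-t))^2), so the radicand of the
    stationary values is the perfect square (2 (N' - P' cos(s-t)))^2, and
    N' - P' cos(s-t) = (k - cos(s-t))^2 + sin^2(s-t) + c > 0.
    With the square root resolved, the "+" value collapses to 0 (the null
    of the numerator 2 + 2 cos(s+x)) and the "-" value to
    (2 + C' / (2 (N'^2 - P'^2))) / N' > 0, so these are gamma_min and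
    gamma_max; both differences are then rational identities in cos(s-t),
    once sin^2 = 1 - cos^2. *)

From Stdlib Require Import Reals Lra Psatz.
Open Scope R_scope.

Lemma Pp_mul_lt_Np (c k x : R) : 0 < c -> x ^ 2 <= 1 -> Pp k * x < Np c k.
Proof.
  intros hc hx; unfold Pp, Np.
  assert (sq : 0 <= (k - x) ^ 2) by apply pow2_ge_0.
  nra.
Qed.

Lemma cos_sq_le1 (x : R) : cos x ^ 2 <= 1.
Proof. pose proof (COS_bound x); nra. Qed.

Lemma sin_sq (x : R) : sin x ^ 2 = 1 - cos x ^ 2.
Proof. pose proof (sin2 x) as h; unfold Rsqr in h; lra. Qed.

Lemma Cp_sum_sq (c k s t : R) :
  Cp c k s t
  = 4 * ((Np c k - Pp k * cos (s - t)) ^ 2 + (Pp k * sin (s - t)) ^ 2).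
Proof. unfold Cp, Lp, Mp; rewrite (Rpow_mult_distr (Pp k)), sin_sq; ring. Qed.

Lemma gamma1_signal_alignment (c k s t : R) :
  gamma1 c k s t (- s) = (Lp + Mp) / (Np c k + Pp k * cos (s - t)).
Proof.
  unfold gamma1.
  replace (s + - s) with 0 by ring; replace (t + - s) with (- (s - t)) by ring.
  now rewrite cos_0, cos_neg, Rmult_1_r.
Qed.

Section StationaryValues.

Variables c k s t : R.
Hypothesis hc : 0 < c.

Local Notation N := (Np c k).
Local Notation P := (Pp k).
Local Notation u := (cos (s - t)).

Lemma Pp_cos_lt_Np : P * u < N.
Proof. exact (Pp_mul_lt_Np c k u hc (cos_sq_le1 _)). Qed.

Lemma Np_add_Pp_cos_gt0 : 0 < N + P * u.
Proof.
  pose proof (cos_sq_le1 (s - t)).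
  pose proof (Pp_mul_lt_Np c k (- u) hc ltac:(nra)); nra.
Qed.

Lemma Np_gt0 : 0 < N.
Proof. pose proof (Pp_mul_lt_Np c k 0 hc ltac:(lra)); nra. Qed.

Lemma Np_sq_sub_Pp_sq_gt0 : 0 < N ^ 2 - P ^ 2.
Proof.
  pose proof (Pp_mul_lt_Np c k 1 hc ltac:(lra)).
  pose proof (Pp_mul_lt_Np c k (-1) hc ltac:(lra)).
  nra.
Qed.

Lemma Cp_gt0 : 0 < Cp c k s t.
Proof.
  rewrite Cp_sum_sq; pose proof Pp_cos_lt_Np.
  pose proof (pow2_ge_0 (P * sin (s - t))); nra.
Qed.

Lemma sqrt_stationary_radicand :
  sqrt (Cp c k s t - (Mp * P * sin (s - t)) ^ 2) = 2 * (N - P * u).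
Proof.
  pose proof Pp_cos_lt_Np.
  rewrite Cp_sum_sq; unfold Mp.
  replace (_ - _) with ((2 * (N - P * u)) ^ 2) by ring.
  apply sqrt_pow2; lra.
Qed.

Lemma gamma_stat_plus_eq0 : gamma_stat true c k s t = 0.
Proof.
  pose proof Np_gt0; pose proof Cp_gt0.
  unfold gamma_stat; rewrite sqrt_stationary_radicand.
  replace (P * (Lp * P - Mp * N * u) + 1 * N * (2 * (N - P * u)))
    with (Cp c k s t / 2) by (unfold Cp, Lp, Mp; field).
  unfold Lp; field; lra.
Qed.

Lemma gamma_stat_minus_eq :
  gamma_stat false c k s t = (Lp + Cp c k s t / (2 * (N ^ 2 - P ^ 2))) / N.
Proof.
  pose proof Np_gt0; pose proof Np_sq_sub_Pp_sq_gt0.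
  unfold gamma_stat; rewrite sqrt_stationary_radicand.
  replace (P * (Lp * P - Mp * N * u) + -1 * N * (2 * (N - P * u)))
    with (- 2 * (N ^ 2 - P ^ 2)) by (unfold Lp, Mp; ring).
  field; lra.
Qed.

Lemma gamma_stat_minus_gt0 : 0 < gamma_stat false c k s t.
Proof.
  pose proof Np_gt0; pose proof Np_sq_sub_Pp_sq_gt0; pose proof Cp_gt0.
  rewrite gamma_stat_minus_eq; unfold Lp.
  apply Rdiv_lt_0_compat; [| lra].
  assert (0 < Cp c k s t / (2 * (N ^ 2 - P ^ 2))) by (apply Rdiv_lt_0_compat; lra).
  lra.
Qed.

Lemma gamma_max_eq : gamma_max c k s t = gamma_stat false c k s t.
Proof.
  unfold gamma_max; rewrite gamma_stat_plus_eq0.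
  apply Rmax_right; left; exact gamma_stat_minus_gt0.
Qed.

Lemma gamma_min_eq0 : gamma_min c k s t = 0.
Proof.
  unfold gamma_min; rewrite gamma_stat_plus_eq0.
  apply Rmin_left; left; exact gamma_stat_minus_gt0.
Qed.

End StationaryValues.

Theorem corollary1 (c k s t : R) (hc : 0 < c) (hk : 0 < k) :
  gamma_max c k s t - gamma1 c k s t (- s)
    = 16 * k ^ 2 * (sin (s - t)) ^ 2
      / ((k ^ 2 + 2 * k * cos (s - t) + 1 + c)
         * ((k + 1) ^ 2 + c) * ((k - 1) ^ 2 + c))
  /\ gamma1 c k s t (- s) - gamma_min c k s t
    = 4 / (k ^ 2 + 2 * k * cos (s - t) + 1 + c).
Proof.
  pose proof (Np_add_Pp_cos_gt0 c k s t hc).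
  pose proof (Np_sq_sub_Pp_sq_gt0 c k hc).
  pose proof (Np_gt0 c k hc).
  rewrite gamma_max_eq, gamma_min_eq0, gamma1_signal_alignment, gamma_stat_minus_eq
    by exact hc.
  rewrite sin_sq.
  unfold Cp, Np, Pp, Lp, Mp in *.
  split; field; nra.
Qed.
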